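(* Let $\kappa$ be a CMF kernel in dimension $D$. For all $\theta_1,\theta_2,\theta_3\in\mathbb R^D$, $\kappa(\theta_1,\theta_2)\,\kappa(\theta_2,\theta_3)\le\kappa(\theta_1,\theta_3)$.
   Context: CMF: $\varphi:[0,\infty)\to\mathbb R$ infinitely differentiable on $(0,\infty)$, right-continuous at $0$, $(-1)^n\varphi^{(n)}(x)\ge0$ for $x>0$, $n\ge0$. A CMF kernel in dimension $D$ is $\kappa(\theta,\theta')=\varphi(\|\theta-\theta'\|_p^p)$ with $\varphi$ a CMF, $\varphi(0)=1$, $\lim_{x\to\infty}\varphi(x)=0$, $0<p\le1$, $\|\theta\|_p^p=\sum_d|\theta[d]|^p$. *)

From Stdlib Require Import Reals Lra List.
Open Scope R_scope.

Definition derivs_on_pos (phi : R -> R) (d : nat -> R -> R) : Prop :=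
  (forall x, 0 < x -> d 0%nat x = phi x) /\
  (forall (n : nat) x, 0 < x -> derivable_pt_lim (d n) x (d (S n) x)).

Definition right_continuous_at_0 (phi : R -> R) : Prop :=
  forall eps, 0 < eps -> exists delta, 0 < delta /\
    forall x, 0 < x < delta -> Rabs (phi x - phi 0) < eps.

(* Completely monotone function on [0,oo) (values on negatives are ignored). *)
Definition CMF (phi : R -> R) : Prop :=
  right_continuous_at_0 phi /\
  exists d : nat -> R -> R, derivs_on_pos phi d /\
    forall (n : nat) x, 0 < x -> 0 <= (-1) ^ n * d n x.

Definition tends_to_0_at_infty (phi : R -> R) : Prop :=
  forall eps, 0 < eps -> exists M, forall x, M < x -> Rabs (phi x) < eps.

(* x^p for x >= 0, p > 0, with 0^p = 0 (Stdlib's Rpower 0 p = 1). *)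
Definition rpow (x p : R) : R := if Rle_dec x 0 then 0 else Rpower x p.

(* Vectors of R^D are represented as nat -> R, coordinates 0..D-1.
   ||theta||_p^p = sum_{d<D} |theta d|^p *)
Definition pnorm_pow (D : nat) (p : R) (theta : nat -> R) : R :=
  fold_right Rplus 0 (map (fun i => rpow (Rabs (theta i)) p) (seq 0 D)).

Definition CMF_kernel (phi : R -> R) (D : nat) (p : R)
  (t t' : nat -> R) : R :=
  phi (pnorm_pow D p (fun i => t i - t' i)).

From Stdlib Require Import Reals Lra Lia List Factorial.
Open Scope R_scope.

(* A completely monotone function f is log-convex.  Expanded at a point c, f has nonnegative
   Taylor coefficients in powers of (c - x), and the remainder decays geometrically on (0, c)
   because R_N(x) / (c - x)^N is nonincreasing; Chebyshev's sum inequality for these power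
   series gives f(a) f(b) <= f(w) f(a + b - w) for 0 < w <= a, b.  Letting w -> 0 with
   f <= f(0) = 1 yields f(a) f(b) <= f(a + b).  As x |-> x^p is subadditive for p <= 1, the
   exponent ||.||_p^p obeys the triangle inequality, and f is nonincreasing. *)

Lemma nonincreasing_of_derive_nonpos (f f' : R -> R) x y : x <= y ->
  (forall t, x <= t <= y -> derivable_pt_lim f t (f' t)) ->
  (forall t, x < t < y -> f' t <= 0) -> f y <= f x.
Proof.
  intros Hxy Hd Hsign.
  destruct (Rle_lt_or_eq_dec _ _ Hxy) as [Hlt | <-]; [| lra].
  destruct (MVT_cor2 f f' x y Hlt Hd) as [t [Hmvt Ht]].
  assert (f' t <= 0) by (apply Hsign; lra).
  assert (f' t * (y - x) <= 0) by nra.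
  lra.
Qed.

Lemma derivable_pt_lim_sub_pow (c x : R) (n : nat) :
  derivable_pt_lim (fun y => (c - y) ^ n) x (- (INR n * (c - x) ^ pred n)).
Proof.
  replace (- (INR n * (c - x) ^ pred n)) with (INR n * (c - x) ^ pred n * (0 - 1)) by ring.
  apply (derivable_pt_lim_comp (fun y => c - y) (fun y => y ^ n)).
  - apply derivable_pt_lim_minus; [apply derivable_pt_lim_const | apply derivable_pt_lim_id].
  - apply derivable_pt_lim_pow.
Qed.

Fixpoint psum (u : nat -> R) (n : nat) : R :=
  match n with O => 0 | S m => psum u m + u m end.

Lemma psum_ext (u v : nat -> R) n : (forall k, u k = v k) -> psum u n = psum v n.
Proof. intros Huv; induction n as [| n IH]; simpl; [| rewrite IH, Huv]; reflexivity. Qed.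

Lemma psum_ge0 (u : nat -> R) n : (forall k, (k < n)%nat -> 0 <= u k) -> 0 <= psum u n.
Proof.
  induction n as [| n IH]; intros Hu; simpl; [lra |].
  assert (0 <= psum u n) by (apply IH; intros; apply Hu; lia).
  assert (0 <= u n) by (apply Hu; lia).
  lra.
Qed.

Lemma pow_le_pow_of_le_1 (r : R) (m n : nat) : 0 <= r <= 1 -> (m <= n)%nat -> r ^ n <= r ^ m.
Proof.
  intros Hr Hmn. replace n with (m + (n - m))%nat by lia. rewrite pow_add.
  assert (0 <= r ^ m) by (apply pow_le; lra).
  assert (r ^ (n - m) <= 1) by (rewrite <- (pow1 (n - m)); apply pow_incr; lra).
  nra.
Qed.

(* Chebyshev's sum inequality for the similarly ordered sequences [p ^ k] and [q ^ k]: the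
   new term is controlled by [sum_(k < n) e k (p ^ n - p ^ k) (q ^ n - q ^ k) >= 0]. *)
Lemma psum_chebyshev_pow (e : nat -> R) (p q : R) n :
  (forall k, 0 <= e k) -> 0 <= p <= 1 -> 0 <= q <= 1 ->
  psum (fun k => e k * p ^ k) n * psum (fun k => e k * q ^ k) n
    <= psum e n * psum (fun k => e k * (p * q) ^ k) n.
Proof.
  intros He Hp Hq. induction n as [| n IH]; simpl; [lra |].
  assert (Hcross : 0 <= psum (fun k => e k * ((p ^ n - p ^ k) * (q ^ n - q ^ k))) n).
  { apply psum_ge0. intros k Hk.
    pose proof (pow_le_pow_of_le_1 p k n Hp ltac:(lia)).
    pose proof (pow_le_pow_of_le_1 q k n Hq ltac:(lia)).
    apply Rmult_le_pos; [apply He | nra]. }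
  assert (Hexpand : forall m,
    psum (fun k => e k * ((p ^ n - p ^ k) * (q ^ n - q ^ k))) m =
    psum e m * p ^ n * q ^ n + psum (fun k => e k * (p * q) ^ k) m
    - psum (fun k => e k * p ^ k) m * q ^ n - psum (fun k => e k * q ^ k) m * p ^ n).
  { induction m as [| m IHm]; simpl; [ring |]. rewrite IHm, Rpow_mult_distr. ring. }
  rewrite Hexpand in Hcross. rewrite Rpow_mult_distr in *.
  specialize (He n). nra.
Qed.

Definition cm_tower (d : nat -> R -> R) : Prop :=
  (forall n x, 0 < x -> derivable_pt_lim (d n) x (d (S n) x)) /\
  (forall n x, 0 < x -> 0 <= (-1) ^ n * d n x).

Definition neg_deriv (d : nat -> R -> R) : nat -> R -> R := fun n x => - d (S n) x.

Lemma cm_tower_neg_deriv d : cm_tower d -> cm_tower (neg_deriv d).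
Proof.
  intros [Hder Hsign]; split; intros n x Hx; unfold neg_deriv.
  - apply derivable_pt_lim_opp with (f := d (S n)), Hder, Hx.
  - specialize (Hsign (S n) x Hx). simpl in Hsign. lra.
Qed.

Lemma cm_tower_ge0 d x : cm_tower d -> 0 < x -> 0 <= d 0%nat x.
Proof. intros [_ Hsign] Hx. specialize (Hsign 0%nat x Hx). simpl in Hsign. lra. Qed.

Lemma cm_tower_nonincreasing d x y : cm_tower d -> 0 < x <= y -> d 0%nat y <= d 0%nat x.
Proof.
  intros [Hder Hsign] Hxy.
  apply nonincreasing_of_derive_nonpos with (f' := d 1%nat); [lra | intros; apply Hder; lra |].
  intros t Ht. specialize (Hsign 1%nat t ltac:(lra)). simpl in Hsign. lra.
Qed.

Section Taylor.

Variable c : R.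

Definition taylor_coef (d : nat -> R -> R) (k : nat) : R := (-1) ^ k * d k c / INR (fact k).

(* The Taylor polynomial of degree [< N] of [d 0] at [c], written in powers of [c - x]
   so that a completely monotone tower has nonnegative coefficients. *)
Definition taylor (d : nat -> R -> R) (N : nat) (x : R) : R :=
  psum (fun k => taylor_coef d k * (c - x) ^ k) N.

Definition taylor_rem (d : nat -> R -> R) (N : nat) (x : R) : R := d 0%nat x - taylor d N x.

Lemma taylor_coef_neg_deriv d k : taylor_coef (neg_deriv d) k = INR (S k) * taylor_coef d (S k).
Proof.
  unfold taylor_coef, neg_deriv. rewrite fact_simpl, mult_INR. simpl pow.
  field. split; [apply INR_fact_neq_0 | apply not_0_INR; lia].
Qed.

Lemma taylor_coef_ge0 d k : cm_tower d -> 0 < c -> 0 <= taylor_coef d k.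
Proof.
  intros [_ Hsign] Hc. unfold taylor_coef, Rdiv.
  apply Rmult_le_pos; [apply Hsign, Hc | left; apply Rinv_0_lt_compat, INR_fact_lt_0].
Qed.

Lemma taylor_ge0 d N x : cm_tower d -> 0 < c -> x <= c -> 0 <= taylor d N x.
Proof.
  intros Hd Hc Hx. apply psum_ge0. intros k _.
  apply Rmult_le_pos; [apply taylor_coef_ge0; auto | apply pow_le; lra].
Qed.

Lemma taylor_rem_center d N : taylor_rem d (S N) c = 0.
Proof.
  unfold taylor_rem, taylor. induction N as [| N IH].
  - unfold taylor_coef. simpl. field.
  - simpl psum in *. rewrite Rminus_diag in *. lra.
Qed.

Lemma derivable_pt_lim_taylor d N x :
  derivable_pt_lim (taylor d (S N)) x (- taylor (neg_deriv d) N x).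
Proof.
  unfold taylor. induction N as [| N IH].
  - simpl. replace (- 0) with 0 by ring.
    apply derivable_pt_lim_ext with (f := fun _ => taylor_coef d 0), derivable_pt_lim_const.
    intros; ring.
  - change (psum (fun k => taylor_coef d k * (c - x) ^ k) (S (S N)))
      with (psum (fun k => taylor_coef d k * (c - x) ^ k) (S N) + taylor_coef d (S N) * (c - x) ^ S N).
    apply derivable_pt_lim_ext with (f := fun y =>
      psum (fun k => taylor_coef d k * (c - y) ^ k) (S N) + taylor_coef d (S N) * (c - y) ^ S N);
      [reflexivity |].
    simpl psum at 2. rewrite taylor_coef_neg_deriv.
    replace (- (psum (fun k => taylor_coef (neg_deriv d) k * (c - x) ^ k) N
        + INR (S N) * taylor_coef d (S N) * (c - x) ^ N))
      with (- psum (fun k => taylor_coef (neg_deriv d) k * (c - x) ^ k) N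
        + taylor_coef d (S N) * (- (INR (S N) * (c - x) ^ pred (S N)))) by (simpl pred; ring).
    apply derivable_pt_lim_plus with
      (f1 := fun y => psum (fun k => taylor_coef d k * (c - y) ^ k) (S N)); [exact IH |].
    apply derivable_pt_lim_scal with (f := fun y => (c - y) ^ S N), derivable_pt_lim_sub_pow.
Qed.

Lemma derivable_pt_lim_taylor_rem d N x : cm_tower d -> 0 < x ->
  derivable_pt_lim (taylor_rem d N) x (- taylor_rem (neg_deriv d) (pred N) x).
Proof.
  intros [Hder _] Hx. unfold taylor_rem. destruct N as [| N]; simpl pred.
  - apply derivable_pt_lim_ext with (f := d 0%nat); [intros; unfold taylor; simpl; ring |].
    replace (- (neg_deriv d 0 x - taylor (neg_deriv d) 0 x)) with (d 1%nat x)
      by (unfold neg_deriv, taylor; simpl; ring).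
    apply Hder, Hx.
  - replace (- (neg_deriv d 0 x - taylor (neg_deriv d) N x))
      with (d 1%nat x - - taylor (neg_deriv d) N x) by (unfold neg_deriv; ring).
    apply derivable_pt_lim_minus with (f1 := d 0%nat); [apply Hder, Hx | apply derivable_pt_lim_taylor].
Qed.

Hypothesis Hc : 0 < c.

Lemma taylor_rem_ge0 N : forall d x, cm_tower d -> 0 < x <= c -> 0 <= taylor_rem d N x.
Proof.
  induction N as [| N IH]; intros d x Hd Hx.
  - unfold taylor_rem, taylor; simpl. pose proof (cm_tower_ge0 d x Hd (proj1 Hx)). lra.
  - rewrite <- (taylor_rem_center d N).
    apply nonincreasing_of_derive_nonpos with (f' := fun t => - taylor_rem (neg_deriv d) N t);
      [lra | intros t Ht; apply derivable_pt_lim_taylor_rem; auto; lra |].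
    intros t Ht. assert (0 <= taylor_rem (neg_deriv d) N t); [| lra].
    apply IH; [apply cm_tower_neg_deriv, Hd | lra].
Qed.

Lemma taylor_le d N x : cm_tower d -> 0 < x <= c -> taylor d N x <= d 0%nat x.
Proof. intros Hd Hx. pose proof (taylor_rem_ge0 N d x Hd Hx). unfold taylor_rem in *. lra. Qed.

Lemma derivable_pt_lim_growth_gap d N t : cm_tower d -> 0 < t ->
  derivable_pt_lim
    (fun y => (c - y) * taylor_rem (neg_deriv d) N y - INR (S N) * taylor_rem d (S N) y) t
    (INR N * taylor_rem (neg_deriv d) N t
     - (c - t) * taylor_rem (neg_deriv (neg_deriv d)) (pred N) t).
Proof.
  intros Hd Ht. pose proof (cm_tower_neg_deriv d Hd) as Hg.
  replace (INR N * taylor_rem (neg_deriv d) N t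
           - (c - t) * taylor_rem (neg_deriv (neg_deriv d)) (pred N) t)
    with ((0 - 1) * taylor_rem (neg_deriv d) N t
          + (c - t) * (- taylor_rem (neg_deriv (neg_deriv d)) (pred N) t)
          - INR (S N) * (- taylor_rem (neg_deriv d) (pred (S N)) t)) by (rewrite S_INR; simpl; ring).
  apply derivable_pt_lim_minus with (f1 := fun y => (c - y) * taylor_rem (neg_deriv d) N y).
  - apply derivable_pt_lim_mult with (f1 := fun y => c - y);
      [ apply derivable_pt_lim_minus; [apply derivable_pt_lim_const | apply derivable_pt_lim_id]
      | apply derivable_pt_lim_taylor_rem; auto ].
  - apply derivable_pt_lim_scal with (f := taylor_rem d (S N)), derivable_pt_lim_taylor_rem; auto.
Qed.

Lemma taylor_rem_growth_of_gap d N x : cm_tower d -> 0 < x <= c ->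
  (forall t, x < t < c -> INR N * taylor_rem (neg_deriv d) N t
                          <= (c - t) * taylor_rem (neg_deriv (neg_deriv d)) (pred N) t) ->
  INR (S N) * taylor_rem d (S N) x <= (c - x) * taylor_rem (neg_deriv d) N x.
Proof.
  intros Hd Hx Hgap.
  set (gap := fun y => (c - y) * taylor_rem (neg_deriv d) N y - INR (S N) * taylor_rem d (S N) y).
  assert (gap c <= gap x); [| unfold gap in *; rewrite taylor_rem_center in *; lra].
  apply nonincreasing_of_derive_nonpos with (f' := fun t =>
    INR N * taylor_rem (neg_deriv d) N t
    - (c - t) * taylor_rem (neg_deriv (neg_deriv d)) (pred N) t);
    [lra | intros t Ht; apply derivable_pt_lim_growth_gap; auto; lra |].
  intros t Ht. specialize (Hgap t Ht). lra.
Qed.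

(* Equivalently, [t |-> taylor_rem d (S N) t / (c - t) ^ (S N)] is nonincreasing on (0, c).
   The gap between the two sides vanishes at [c], and its derivative is controlled by the
   same inequality one degree lower, for the tower [neg_deriv d]. *)
Lemma taylor_rem_growth N : forall d x, cm_tower d -> 0 < x <= c ->
  INR (S N) * taylor_rem d (S N) x <= (c - x) * taylor_rem (neg_deriv d) N x.
Proof.
  induction N as [| N IH]; intros d x Hd Hx;
    apply taylor_rem_growth_of_gap; auto; intros t Ht; simpl pred.
  - assert (0 <= taylor_rem (neg_deriv (neg_deriv d)) 0 t)
      by (apply taylor_rem_ge0; [do 2 apply cm_tower_neg_deriv; exact Hd | lra]).
    simpl INR. nra.
  - apply IH; [apply cm_tower_neg_deriv, Hd | lra].
Qed.

Lemma taylor_rem_ratio d N w x : cm_tower d -> 0 < w <= x -> x < c ->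
  taylor_rem d N x * (c - w) ^ N <= taylor_rem d N w * (c - x) ^ N.
Proof.
  intros Hd Hwx Hxc.
  assert (Hpow : forall t, t < c -> 0 < (c - t) ^ N) by (intros t Ht; apply pow_lt; lra).
  set (num := fun t => - taylor_rem (neg_deriv d) (pred N) t * (c - t) ^ N
                       - - (INR N * (c - t) ^ pred N) * taylor_rem d N t).
  assert (Hratio : taylor_rem d N x / (c - x) ^ N <= taylor_rem d N w / (c - w) ^ N).
  { apply nonincreasing_of_derive_nonpos with
      (f := fun t => taylor_rem d N t / (c - t) ^ N) (f' := fun t => num t / ((c - t) ^ N)²);
      [lra | intros t Ht |].
    - apply derivable_pt_lim_div with (f2 := fun y => (c - y) ^ N);
        [apply derivable_pt_lim_taylor_rem; auto; lra | apply derivable_pt_lim_sub_pow |].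
      apply Rgt_not_eq, Hpow. lra.
    - intros t Ht.
      assert (0 < / ((c - t) ^ N)²) by (apply Rinv_0_lt_compat, Rlt_0_sqr, Rgt_not_eq, Hpow; lra).
      enough (num t <= 0) by (unfold Rdiv; nra).
      unfold num. destruct N as [| M]; simpl pred.
      + assert (0 <= taylor_rem (neg_deriv d) 0 t)
          by (apply taylor_rem_ge0; [apply cm_tower_neg_deriv, Hd | lra]).
        simpl. lra.
      + pose proof (taylor_rem_growth M d t Hd ltac:(lra)).
        assert (0 <= (c - t) ^ M) by (apply pow_le; lra).
        simpl pow. nra. }
  pose proof (Hpow x Hxc). pose proof (Hpow w ltac:(lra)).
  apply (Rmult_le_compat_r ((c - x) ^ N * (c - w) ^ N)) in Hratio; [| nra].
  replace (taylor_rem d N x / (c - x) ^ N * ((c - x) ^ N * (c - w) ^ N))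
    with (taylor_rem d N x * (c - w) ^ N) in Hratio by (field; lra).
  replace (taylor_rem d N w / (c - w) ^ N * ((c - x) ^ N * (c - w) ^ N))
    with (taylor_rem d N w * (c - x) ^ N) in Hratio by (field; lra).
  exact Hratio.
Qed.

(* The Taylor series at [c] converges to [d 0] on (0, c): by [taylor_rem_ratio] with [w := x / 2]
   the remainder decays like [((c - x) / (c - x / 2)) ^ N]. *)
Lemma taylor_cv d x : cm_tower d -> 0 < x < c -> Un_cv (fun N => taylor d N x) (d 0%nat x).
Proof.
  intros Hd Hx eps Heps.
  set (w := x / 2). set (rho := (c - x) / (c - w)). set (M := d 0%nat w).
  assert (Hw : 0 < w < x) by (unfold w; lra).
  assert (HM : 0 <= M) by (apply cm_tower_ge0; auto; lra).
  assert (Hrho_eq : rho * (c - w) = c - x) by (unfold rho; field; lra).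
  assert (Hrho : 0 <= rho < 1) by (assert (0 < c - w) by lra; split; nra).
  destruct (pow_lt_1_zero rho ltac:(rewrite Rabs_pos_eq; lra) (eps / (M + 1)))
    as [N0 HN0]; [apply Rdiv_lt_0_compat; lra |].
  exists N0. intros N HN. specialize (HN0 N HN). rewrite Rabs_pos_eq in HN0 by (apply pow_le; lra).
  assert (Hrem : taylor_rem d N x <= M * rho ^ N).
  { assert (Hcw : 0 < (c - w) ^ N) by (apply pow_lt; lra).
    apply (Rmult_le_reg_r ((c - w) ^ N)); [exact Hcw |].
    replace (M * rho ^ N * (c - w) ^ N) with (M * (c - x) ^ N)
      by (rewrite Rmult_assoc, <- Rpow_mult_distr, Hrho_eq; reflexivity).
    eapply Rle_trans; [apply taylor_rem_ratio; auto; lra |].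
    apply Rmult_le_compat_r; [apply pow_le; lra |].
    pose proof (taylor_ge0 d N w Hd Hc ltac:(lra)). unfold taylor_rem, M. lra. }
  assert (M * rho ^ N <= M * (eps / (M + 1))) by (apply Rmult_le_compat_l; lra).
  assert (M * (eps / (M + 1)) < eps).
  { apply (Rmult_lt_reg_r (M + 1)); [lra |].
    replace (M * (eps / (M + 1)) * (M + 1)) with (M * eps) by (field; lra). nra. }
  pose proof (taylor_rem_ge0 N d x Hd ltac:(lra)).
  unfold R_dist. rewrite Rabs_minus_sym, Rabs_pos_eq; unfold taylor_rem in *; lra.
Qed.

End Taylor.

Lemma Un_cv_le_bound (u : nat -> R) l M : (forall n, u n <= M) -> Un_cv u l -> l <= M.
Proof.
  intros Hu Hcv. apply (Rle_cv_lim (Vn := fun _ => M) Hu Hcv).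
  intros eps Heps. exists 0%nat. intros n _. unfold R_dist. rewrite Rminus_diag, Rabs_R0. exact Heps.
Qed.

(* Expanding all four values at [c] in powers of [(c - x) / (c - w)], the inequality is
   Chebyshev's sum inequality for the nonnegative Taylor coefficients, in the limit. *)
Lemma cm_tower_log_convex_at d c w a b : cm_tower d -> 0 < w <= a -> w <= b -> a < c -> b < c ->
  d 0%nat a * d 0%nat b <= d 0%nat w * d 0%nat (c - (c - a) * (c - b) / (c - w)).
Proof.
  intros Hd Hw Hwb Hac Hbc.
  set (U := c - w). set (p := (c - a) / U). set (q := (c - b) / U).
  set (z := c - (c - a) * (c - b) / U).
  assert (HU : 0 < U) by (unfold U; lra).
  assert (Hp_eq : c - a = U * p) by (unfold p; field; lra).
  assert (Hq_eq : c - b = U * q) by (unfold q; field; lra).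
  assert (Hz_eq : c - z = U * (p * q)) by (unfold z, p, q; field; lra).
  assert (Hw_eq : c - w = U * 1) by (unfold U; ring).
  assert (Hp : 0 <= p <= 1) by (split; nra).
  assert (Hq : 0 <= q <= 1) by (split; nra).
  assert (Hz : a <= z <= c) by (split; nra).
  set (e := fun k => taylor_coef c d k * U ^ k).
  assert (He : forall k, 0 <= e k)
    by (intros k; apply Rmult_le_pos; [apply taylor_coef_ge0; auto; lra | apply pow_le; lra]).
  assert (Htaylor : forall N x r, c - x = U * r -> taylor c d N x = psum (fun k => e k * r ^ k) N).
  { intros N x r Hr. apply psum_ext. intros k. rewrite Hr, Rpow_mult_distr. unfold e. ring. }
  apply (Un_cv_le_bound (fun N => taylor c d N a * taylor c d N b)).
  - intros N. rewrite (Htaylor N a p Hp_eq), (Htaylor N b q Hq_eq).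
    eapply Rle_trans; [apply psum_chebyshev_pow; auto |].
    rewrite <- (Htaylor N z (p * q) Hz_eq).
    replace (psum e N) with (taylor c d N w)
      by (rewrite (Htaylor N w 1 Hw_eq); apply psum_ext; intros; rewrite pow1; ring).
    apply Rmult_le_compat; try (apply taylor_ge0; auto; lra); apply taylor_le; auto; lra.
  - apply CV_mult; apply taylor_cv; auto; lra.
Qed.

Lemma le_of_continuity_pt (g : R -> R) y X : continuity_pt g y ->
  (forall del, 0 < del -> exists y', Rabs (y' - y) < del /\ X <= g y') -> X <= g y.
Proof.
  intros Hg Hnear. apply Rle_plus_epsilon. intros eps Heps.
  destruct (Hg eps Heps) as [del [Hdel Hclose]].
  destruct (Hnear del Hdel) as [y' [Hy' HX]].
  destruct (Req_dec y' y) as [-> | Hne]; [lra |].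
  assert (Hg' : R_dist (g y') (g y) < eps)
    by (apply Hclose; split; [split; [exact I | auto] | exact Hy']).
  unfold R_dist in Hg'. apply Rabs_def2 in Hg'. lra.
Qed.

Lemma cm_tower_continuity_pt d x : cm_tower d -> 0 < x -> continuity_pt (d 0%nat) x.
Proof. intros [Hder _] Hx. apply derivable_continuous_pt. exists (d 1%nat x). apply Hder, Hx. Qed.

(* Letting the expansion point [c] go to infinity in [cm_tower_log_convex_at]. *)
Lemma cm_tower_log_convex d w a b : cm_tower d -> 0 < w <= a -> w <= b ->
  d 0%nat a * d 0%nat b <= d 0%nat w * d 0%nat (a + b - w).
Proof.
  intros Hd Hwa Hwb.
  apply le_of_continuity_pt with (g := fun y => d 0%nat w * d 0%nat y).
  { apply continuity_pt_scal with (f := d 0%nat), cm_tower_continuity_pt; auto; lra. }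
  intros del Hdel.
  set (k := (a - w) * (b - w) / del). set (c := w + a + b + k).
  assert (Hk : 0 <= k) by (apply Rmult_le_pos; [nra | left; apply Rinv_0_lt_compat, Hdel]).
  assert (Hk_eq : k * del = (a - w) * (b - w)) by (unfold k; field; lra).
  exists (c - (c - a) * (c - b) / (c - w)). split.
  - set (r := (a - w) * (b - w) / (c - w)).
    assert (Hr_eq : r * (c - w) = (a - w) * (b - w)) by (unfold r, c; field; lra).
    replace (c - (c - a) * (c - b) / (c - w) - (a + b - w)) with (- r) by (unfold r, c; field; lra).
    assert (0 <= r) by (unfold c in Hr_eq; nra).
    rewrite Rabs_Ropp, Rabs_pos_eq by lra. unfold c in Hr_eq. nra.
  - apply cm_tower_log_convex_at; auto; unfold c; lra.
Qed.

Lemma CMF_cm_tower phi : CMF phi -> exists d, cm_tower d /\ forall x, 0 < x -> d 0%nat x = phi x.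
Proof. intros [_ [d [[Hd0 Hder] Hsign]]]. exists d. repeat split; auto. Qed.

Lemma CMF_nonincreasing phi x y : CMF phi -> 0 <= x <= y -> phi y <= phi x.
Proof.
  intros Hphi Hxy. destruct (CMF_cm_tower phi Hphi) as [d [Hd Hd0]].
  assert (Hpos : forall x y, 0 < x <= y -> phi y <= phi x)
    by (intros u v Huv; rewrite <- !Hd0 by lra; apply cm_tower_nonincreasing; auto).
  destruct (Rle_lt_or_eq_dec 0 x (proj1 Hxy)) as [Hx | <-]; [apply Hpos; lra |].
  destruct (Rle_lt_or_eq_dec 0 y (proj2 Hxy)) as [Hy | <-]; [| lra].
  destruct (Rle_lt_dec (phi y) (phi 0)) as [| Hlt]; [assumption | exfalso].
  destruct (proj1 Hphi (phi y - phi 0) ltac:(lra)) as [del [Hdel Hclose]].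
  set (t := Rmin (del / 2) y).
  assert (Ht : 0 < t <= y /\ t < del)
    by (unfold t; pose proof (Rmin_l (del / 2) y); pose proof (Rmin_r (del / 2) y);
        pose proof (Rmin_pos (del / 2) y ltac:(lra) Hy); lra).
  specialize (Hclose t ltac:(lra)). apply Rabs_def2 in Hclose.
  pose proof (Hpos t y ltac:(lra)). lra.
Qed.

Lemma CMF_mul_le_add phi a b : CMF phi -> phi 0 = 1 -> 0 <= a -> 0 <= b ->
  phi a * phi b <= phi (a + b).
Proof.
  intros Hphi H0 Ha Hb. destruct (CMF_cm_tower phi Hphi) as [d [Hd Hd0]].
  destruct (Rle_lt_or_eq_dec 0 a Ha) as [Ha' | <-];
    [| rewrite H0, Rplus_0_l; lra].
  destruct (Rle_lt_or_eq_dec 0 b Hb) as [Hb' | <-];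
    [| rewrite H0, Rplus_0_r; lra].
  rewrite <- !Hd0 by lra.
  apply le_of_continuity_pt; [apply cm_tower_continuity_pt; auto; lra |].
  intros del Hdel.
  set (w := Rmin del (Rmin a b) / 2).
  assert (Hw : 0 < w < del /\ w < a /\ w < b)
    by (unfold w; pose proof (Rmin_l del (Rmin a b)); pose proof (Rmin_r del (Rmin a b));
        pose proof (Rmin_l a b); pose proof (Rmin_r a b);
        pose proof (Rmin_pos del (Rmin a b) Hdel (Rmin_pos a b Ha' Hb')); lra).
  exists (a + b - w). split; [rewrite Rabs_left1; lra |].
  eapply Rle_trans; [apply (cm_tower_log_convex d w); auto; lra |].
  assert (d 0%nat w <= 1)
    by (rewrite Hd0, <- H0 by lra; apply CMF_nonincreasing; auto; lra).
  pose proof (cm_tower_ge0 d (a + b - w) Hd ltac:(lra)). nra.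
Qed.

Lemma le_Rpower_of_le_1 x p : 0 < x <= 1 -> p <= 1 -> x <= Rpower x p.
Proof.
  intros Hx Hp.
  assert (Hln : ln x <= 0).
  { rewrite <- ln_1. destruct (Rle_lt_or_eq_dec _ _ (proj2 Hx)) as [Hlt | ->];
      [left; apply ln_increasing; lra | lra]. }
  unfold Rpower. replace (p * ln x) with (ln x + (p - 1) * ln x) by ring.
  rewrite exp_plus, exp_ln by lra.
  assert (0 <= (p - 1) * ln x) by nra.
  pose proof (exp_ineq1_le ((p - 1) * ln x)). nra.
Qed.

Lemma rpow_0 p : rpow 0 p = 0.
Proof. unfold rpow. destruct (Rle_dec 0 0); lra. Qed.

Lemma rpow_pos x p : 0 < x -> rpow x p = Rpower x p.
Proof. intros Hx. unfold rpow. destruct (Rle_dec x 0); [lra | reflexivity]. Qed.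

Lemma rpow_ge0 x p : 0 <= rpow x p.
Proof. unfold rpow. destruct (Rle_dec x 0); [lra | left; apply exp_pos]. Qed.

Lemma rpow_le_compat x y p : 0 <= p -> 0 <= x <= y -> rpow x p <= rpow y p.
Proof.
  intros Hp Hxy. destruct (Rle_lt_or_eq_dec 0 x (proj1 Hxy)) as [Hx | <-].
  - rewrite !rpow_pos by lra. apply Rle_Rpower_l; lra.
  - rewrite rpow_0. apply rpow_ge0.
Qed.

(* Scale by [s + t]: then [s / (s + t) + t / (s + t) = 1] and each ratio [r] satisfies [r <= r ^ p]. *)
Lemma rpow_add_le s t p : 0 < p <= 1 -> 0 <= s -> 0 <= t -> rpow (s + t) p <= rpow s p + rpow t p.
Proof.
  intros Hp Hs Ht.
  destruct (Rle_lt_or_eq_dec 0 s Hs) as [Hs' | <-]; [| rewrite rpow_0, Rplus_0_l; lra].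
  destruct (Rle_lt_or_eq_dec 0 t Ht) as [Ht' | <-]; [| rewrite rpow_0, Rplus_0_r; lra].
  rewrite !rpow_pos by lra.
  set (S := s + t).
  assert (Hscale : forall r, 0 < r <= S -> r / S * Rpower S p <= Rpower r p).
  { intros r Hr.
    replace (Rpower r p) with (Rpower S p * Rpower (r / S) p)
      by (rewrite Rpower_mult_distr by (unfold S in *; try apply Rdiv_lt_0_compat; lra);
          f_equal; unfold S in *; field; lra).
    assert (0 < Rpower S p) by apply exp_pos.
    assert (r / S <= Rpower (r / S) p); [| nra].
    apply le_Rpower_of_le_1; [| lra]. split.
    - apply Rdiv_lt_0_compat; unfold S in *; lra.
    - apply (Rmult_le_reg_r S); [unfold S; lra |]. unfold Rdiv. rewrite Rmult_assoc, Rinv_l; lra. }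
  pose proof (Hscale s ltac:(unfold S; lra)). pose proof (Hscale t ltac:(unfold S; lra)).
  replace (Rpower S p) with (s / S * Rpower S p + t / S * Rpower S p) at 1
    by (unfold S; field; lra).
  lra.
Qed.

Lemma sum_map_le_add (f g h : nat -> R) (l : list nat) : (forall i, f i <= g i + h i) ->
  fold_right Rplus 0 (map f l) <= fold_right Rplus 0 (map g l) + fold_right Rplus 0 (map h l).
Proof. intros Hfgh. induction l as [| i l IH]; simpl; [lra |]. specialize (Hfgh i). lra. Qed.

Lemma sum_map_ge0 (f : nat -> R) (l : list nat) : (forall i, 0 <= f i) ->
  0 <= fold_right Rplus 0 (map f l).
Proof. intros Hf. induction l as [| i l IH]; simpl; [lra |]. specialize (Hf i). lra. Qed.

Lemma pnorm_pow_ge0 D p t : 0 <= pnorm_pow D p t.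
Proof. apply sum_map_ge0. intros; apply rpow_ge0. Qed.

Lemma pnorm_pow_triangle D p (t1 t2 t3 : nat -> R) : 0 < p <= 1 ->
  pnorm_pow D p (fun i => t1 i - t3 i)
    <= pnorm_pow D p (fun i => t1 i - t2 i) + pnorm_pow D p (fun i => t2 i - t3 i).
Proof.
  intros Hp. apply sum_map_le_add. intros i.
  eapply Rle_trans; [| apply rpow_add_le; auto; apply Rabs_pos].
  apply rpow_le_compat; [lra | split; [apply Rabs_pos |]].
  replace (t1 i - t3 i) with ((t1 i - t2 i) + (t2 i - t3 i)) by ring. apply Rabs_triang.
Qed.

Theorem mainTheorem13 (D : nat) (phi : R -> R) (p : R) :
  CMF phi -> phi 0 = 1 -> tends_to_0_at_infty phi ->
  0 < p -> p <= 1 ->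
  forall t1 t2 t3 : nat -> R,
    CMF_kernel phi D p t1 t2 * CMF_kernel phi D p t2 t3
      <= CMF_kernel phi D p t1 t3.
Proof.
  intros Hphi H0 _ Hp Hp1 t1 t2 t3. unfold CMF_kernel.
  pose proof (pnorm_pow_triangle D p t1 t2 t3 (conj Hp Hp1)).
  pose proof (pnorm_pow_ge0 D p (fun i => t1 i - t2 i)).
  pose proof (pnorm_pow_ge0 D p (fun i => t2 i - t3 i)).
  pose proof (pnorm_pow_ge0 D p (fun i => t1 i - t3 i)).
  eapply Rle_trans; [apply CMF_mul_le_add; auto |].
  apply CMF_nonincreasing; auto.
Qed.
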